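(* For all $m\geq 2$: $s_{1,m}(211,213)=1$, $s_{2,m}(211,213)=m+1$, and for all $n\geq 3$, \[ s_{n,m}(211,213)=2\,s_{n-1,m}(211,213)+s_{n-2,m}(211,213). \]
   Context: $[n]_m=\{1^m,\ldots,n^m\}$; a permutation of $[n]_m$ is a sequence of length $nm$ in which each element of $[n]$ appears exactly $m$ times. A sequence avoids a pattern $\pi$ if it has no subsequence order-isomorphic to $\pi$ (same relative order and same equalities among entries). $s_{n,m}(\Pi)$ is the number of permutations of $[n]_m$ avoiding all patterns in $\Pi$. *)

From mathcomp Require Import all_boot.
Set Implicit Arguments. Unset Strict Implicit. Unset Printing Implicit Defensive.

Definition order_iso (s p : seq nat) : bool :=
  (size s == size p) &&
  [forall i : 'I_(size s), forall j : 'I_(size s),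
     (nth 0 s i < nth 0 s j) == (nth 0 p i < nth 0 p j)].

Definition contains (s p : seq nat) : bool :=
  [exists m : (size s).-tuple bool, order_iso (mask m s) p].

Definition avoids (s p : seq nat) : bool := ~~ contains s p.

(* A permutation of the multiset [n]_m = {1^m,...,n^m}: a word of length n*m
   over the alphabet 'I_n (letter i standing for i+1) in which each letter
   occurs exactly m times. *)
Definition is_multiperm (n m : nat) (w : (n * m).-tuple 'I_n) : bool :=
  [forall i : 'I_n, count_mem i w == m].

Definition s_count (n m : nat) (Pi : seq (seq nat)) : nat :=
  #|[set w : (n * m).-tuple 'I_n |
      is_multiperm w && all (avoids (map (fun x : 'I_n => val x) w)) Pi]|.

From mathcomp Require Import all_boot zify.
Set Implicit Arguments. Unset Strict Implicit. Unset Printing Implicit Defensive.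

(* We work with words over {0,...,n-1} (letter i standing for i+1).  A triple
   of entries a b c (left to right) is an occurrence of 211 or of 213 exactly
   when b < a and (b = c or a < c); a word is "pattern-free" when it has no
   such triple.  The core of the proof is a decomposition of the
   pattern-free words over {0,...,n+2} with every letter repeated m >= 2
   times ("valid" words): writing w (resp. u) also for its shift by one
   (resp. two) letters, such a word is exactly one of
     (A) 0^m w            with w a valid word on n+2 letters,
     (B) 0^(m-1) w 0      with w a valid word on n+2 letters,
     (C) 0^(m-1) 1^(m-1) u 0 1  with u a valid word on n+1 letters.
   The three forms are told apart by the m-th and the last letter, so
   s_{n+3} = 2 s_{n+2} + s_{n+1}.  For two letters the valid words are
   0^(m-1) 1^k 0 1^(m-k), 0 <= k <= m, and for one letter only 0^m. *)

(* a b c is an occurrence of 211 or 213. *)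
Definition bad3 (a b c : nat) : bool := (b < a) && ((b == c) || (a < c)).

Definition pfree (s : seq nat) : Prop :=
  forall a b c, subseq [:: a; b; c] s -> ~~ bad3 a b c.

Definition PI : seq (seq nat) := [:: [:: 2; 1; 1]; [:: 2; 1; 3]].

Lemma order_iso3 a b c x y z : order_iso [:: a; b; c] [:: x; y; z] <->
  [/\ (a < b) = (x < y), (a < c) = (x < z) & (b < a) = (y < x)] /\
  [/\ (b < c) = (y < z), (c < a) = (z < x) & (c < b) = (z < y)].
Proof.
rewrite /order_iso /=; split.
- move=> /forallP H; have h i j := eqP (forallP (H i) j).
  have := h (@Ordinal 3 0 isT) (@Ordinal 3 1 isT).
  have := h (@Ordinal 3 0 isT) (@Ordinal 3 2 isT).
  have := h (@Ordinal 3 1 isT) (@Ordinal 3 0 isT).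
  have := h (@Ordinal 3 1 isT) (@Ordinal 3 2 isT).
  have := h (@Ordinal 3 2 isT) (@Ordinal 3 0 isT).
  have := h (@Ordinal 3 2 isT) (@Ordinal 3 1 isT).
  by rewrite /= => -> -> -> -> -> ->.
- case=> -[h1 h2 h3] [h4 h5 h6].
  apply/forallP => -[[|[|[|i]]] Hi]; apply/forallP => -[[|[|[|j]]] Hj] //=;
  by rewrite ?ltnn ?h1 ?h2 ?h3 ?h4 ?h5 ?h6.
Qed.

Lemma contains3P s x y z : contains s [:: x; y; z] <->
  exists a b c, subseq [:: a; b; c] s /\ order_iso [:: a; b; c] [:: x; y; z].
Proof.
split.
- case/existsP => msk Hm.
  have : size (mask msk s) = 3 by move: Hm => /andP[/eqP -> _].
  case E: (mask msk s) => [|a [|b [|c [|]]]] //= _.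
  by exists a, b, c; rewrite -E mask_subseq.
- move=> [a [b [c [/subseqP [msk Hm E] H]]]].
  have Hm' : size msk == size s by apply/eqP.
  by apply/existsP; exists (Tuple Hm'); rewrite /= -E.
Qed.

Lemma avoids_PI s : all (avoids s) PI <-> pfree s.
Proof.
rewrite /= andbT /avoids; split.
- move=> /andP [H211 H213] a b c Hs; apply/negP => /andP [hba /orP [hbc|hac]].
  + move/negP: H211; apply; apply/contains3P; exists a, b, c; split => //.
    by move/eqP: hbc => <-; apply/order_iso3; split; split; lia.
  + move/negP: H213; apply; apply/contains3P; exists a, b, c; split => //.
    by apply/order_iso3; split; split; lia.
- move=> H; apply/andP; split; apply/negP => /contains3P [a [b [c [Hs /order_iso3 Hi]]]];
  case: Hi => -[/= h1 h2 h3] [/= h4 h5 h6];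
  move/negP: (H a b c Hs); apply; apply/andP; split; try apply/orP; lia.
Qed.

Definition valid (k n m : nat) (s : seq nat) : Prop :=
  [/\ size s = n * m, all (fun x => k <= x < k + n) s,
      forall i, i < n -> count_mem (k + i) s = m & pfree s].

Definition enumerates (n m : nat) (L : seq (seq nat)) : Prop :=
  uniq L /\ forall s, s \in L <-> valid 0 n m s.

Lemma count_val k (i : 'I_k) (w : seq 'I_k) :
  count_mem i w = count_mem (val i) (map val w).
Proof. by rewrite count_map; apply: eq_count => x; rewrite /preim /= (inj_eq val_inj). Qed.

Lemma s_count_enum n m L : enumerates n.+1 m L -> s_count n.+1 m PI = size L.
Proof.
move=> [UL HL]; rewrite /s_count cardE.
set f := fun w : (n.+1 * m).-tuple 'I_n.+1 => map (fun x : 'I_n.+1 => val x) w.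
have finj : injective f by move=> w1 w2 /(inj_map val_inj) E; apply: val_inj.
rewrite -(size_map f); apply/perm_size/uniq_perm => //.
  by rewrite (map_inj_uniq finj) enum_uniq.
move=> s; apply/idP/idP.
- case/mapP => w; rewrite mem_enum inE => /andP [Hm Ha] ->.
  apply/HL; split; first by rewrite size_map size_tuple.
  + by apply/allP => x /mapP [y _ ->]; apply: ltn_ord.
  + by move=> i Hi; move/forallP: Hm => /(_ (Ordinal Hi)) /eqP; rewrite count_val.
  + exact/avoids_PI.
- move/HL => [Hs Hall Hc Hav].
  have Hsz : size (map (@inord n) s) == n.+1 * m by rewrite size_map Hs.
  have Hf : map val (Tuple Hsz) = s.
    rewrite /= -map_comp -[RHS]map_id; apply/eq_in_map => x Hx /=.
    by rewrite inordK //; move/allP: Hall => /(_ x Hx).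
  apply/mapP; exists (Tuple Hsz); last by rewrite /f Hf.
  rewrite mem_enum inE; apply/andP; split; last by rewrite Hf; apply/avoids_PI.
  by apply/forallP => i; rewrite count_val Hf Hc ?ltn_ord.
Qed.

Lemma subseq_catP (s p q : seq nat) : subseq s (p ++ q) ->
  exists s1 s2, [/\ s = s1 ++ s2, subseq s1 p & subseq s2 q].
Proof.
case/subseqP => msk Hm ->.
exists (mask (take (size p) msk) p), (mask (drop (size p) msk) q); split;
  try exact: mask_subseq.
by rewrite -mask_cat ?cat_take_drop // size_takel // Hm size_cat leq_addr.
Qed.

Lemma subseq3_cat a b c (p q : seq nat) : subseq [:: a; b; c] (p ++ q) ->
  [\/ subseq [:: a; b; c] p, subseq [:: a; b] p /\ c \in q,
      a \in p /\ subseq [:: b; c] q | subseq [:: a; b; c] q].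
Proof.
case/subseq_catP => s1 [s2 [E H1 H2]].
case: s1 E H1 => [|x1 [|x2 [|x3 [|x4 s1]]]] /= E H1.
- by rewrite -E in H2; apply: Or44.
- by case: E => ? ?; subst; rewrite sub1seq in H1; apply: Or43.
- by case: E => ? ? ?; subst; rewrite sub1seq in H2; apply: Or42.
- by case: E => ? ? ? ?; subst; apply: Or41.
- by case: E => _ _ _ /(congr1 size) /=; rewrite size_cat; lia.
Qed.

Lemma subseq2_cat a b (p q : seq nat) : subseq [:: a; b] (p ++ q) ->
  [\/ subseq [:: a; b] p, a \in p /\ b \in q | subseq [:: a; b] q].
Proof.
case/subseq_catP => s1 [s2 [E H1 H2]].
case: s1 E H1 => [|x1 [|x2 [|x3 s1]]] /= E H1.
- by rewrite -E in H2; apply: Or33.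
- by case: E => ? ?; subst; rewrite sub1seq in H2; rewrite sub1seq in H1; apply: Or32.
- by case: E => ? ? ?; subst; apply: Or31.
- by case: E => _ _ /(congr1 size) /=; rewrite size_cat; lia.
Qed.

Lemma sub3_cat (a b c : nat) X Y :
  a \in X -> subseq [:: b; c] Y -> subseq [:: a; b; c] (X ++ Y).
Proof. by move=> Ha Hb; apply: (@cat_subseq _ [:: a] [:: b; c]); rewrite ?sub1seq. Qed.

Lemma sub2_cat (b c : nat) X Y : b \in X -> c \in Y -> subseq [:: b; c] (X ++ Y).
Proof. by move=> Hb Hc; apply: (@cat_subseq _ [:: b] [:: c]); rewrite sub1seq. Qed.

Lemma subseq_suffix (l Z Y : seq nat) : subseq l Y -> subseq l (Z ++ Y).
Proof. by move=> H; apply: subseq_trans H (suffix_subseq _ _). Qed.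

Lemma subseq_count2 (y : nat) (t : seq nat) : 1 < count_mem y t -> subseq [:: y; y] t.
Proof.
elim: t => //= z t IH; case: (eqVneq z y) => _.
- by rewrite add1n ltnS -has_count => /hasP [x Hx /eqP E]; rewrite sub1seq -E.
- by rewrite add0n; exact: IH.
Qed.

Lemma pfree_bad s a b c : pfree s -> subseq [:: a; b; c] s -> bad3 a b c -> False.
Proof. by move=> A H R; move: (A a b c H); rewrite R. Qed.

Lemma pfree_subseq s1 s2 : subseq s1 s2 -> pfree s2 -> pfree s1.
Proof. by move=> H A a b c Hs; apply: A; apply: subseq_trans Hs H. Qed.

Lemma pfree_cat p q : pfree p -> pfree q ->
  (forall a b c, subseq [:: a; b] p -> c \in q -> ~~ bad3 a b c) ->
  (forall a b c, a \in p -> subseq [:: b; c] q -> ~~ bad3 a b c) ->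
  pfree (p ++ q).
Proof.
move=> Ap Aq H1 H2 a b c /subseq3_cat [h|[h1 h2]|[h1 h2]|h];
[exact: Ap h | exact: H1 h1 h2 | exact: H2 h1 h2 | exact: Aq h].
Qed.

Lemma pfree_shift k w : pfree (map (addn k) w) <-> pfree w.
Proof.
have bad3_shift a b c : bad3 (k + a) (k + b) (k + c) = bad3 a b c.
  by rewrite /bad3 !ltn_add2l eqn_add2l.
split.
- move=> A a b c Hs; rewrite -bad3_shift; apply: A.
  by have := map_subseq (addn k) Hs.
- move=> A a b c /subseqP [msk Hm E]; rewrite -map_mask in E.
  have : size (mask msk w) = 3 by rewrite -(size_map (addn k)) -E.
  case E2: (mask msk w) => [|a' [|b' [|c' [|]]]] //= _.
  rewrite E2 /= in E; case: E => -> -> ->; rewrite bad3_shift; apply: A.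
  by rewrite -E2 mask_subseq.
Qed.



Lemma no_bad3_nseq a b c v k : subseq [:: a; b] (nseq k v) -> ~~ bad3 a b c.
Proof.
move=> Hs.
have Ha : a \in nseq k v by apply: (mem_subseq Hs); rewrite !inE eqxx.
have Hb : b \in nseq k v by apply: (mem_subseq Hs); rewrite !inE eqxx orbT.
by move: Ha Hb; rewrite !mem_nseq => /andP [_ /eqP ->] /andP [_ /eqP ->]; rewrite /bad3 ltnn.
Qed.

Lemma pfree_nseq k v : pfree (nseq k v).
Proof.
move=> a b c Hs; apply: (@no_bad3_nseq _ _ _ v k).
exact: subseq_trans (@prefix_subseq _ [:: a; b] [:: c]) Hs.
Qed.

Lemma pfree_zeros_cat p q : all (pred1 0) p -> pfree q -> pfree (p ++ q).
Proof.
move=> Hp Aq; apply: pfree_cat => //.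
- by move/all_pred1P: Hp => ->; apply: pfree_nseq.
- move=> a b c Hs _; have ha : a \in p by apply: (mem_subseq Hs); rewrite !inE eqxx.
  by move/allP: Hp => /(_ a ha) /eqP ->; rewrite /bad3 ltn0.
- by move=> a b c Ha Hs; move/allP: Hp => /(_ a Ha) /eqP ->; rewrite /bad3 ltn0.
Qed.

Lemma pfree_rcons q c : pfree q ->
  (forall a b, subseq [:: a; b] q -> ~~ bad3 a b c) -> pfree (q ++ [:: c]).
Proof.
move=> Aq H; apply: pfree_cat => //.
- by move=> a b c0 /size_subseq.
- by move=> a b c0 Hs; rewrite inE => /eqP ->; apply: H.
- by move=> a b c' _ /size_subseq.
Qed.



Lemma nseqS_cat k (x : nat) X : nseq k.+1 x ++ X = nseq k x ++ x :: X.
Proof. by elim: k => //= k ->. Qed.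

Lemma all_nseq0 j : all (pred1 0) (nseq j 0).
Proof. by apply/all_pred1P; rewrite size_nseq. Qed.

Lemma count_valid k n m U : valid k n m U ->
  forall i, count_mem i U = if k <= i < k + n then m else 0.
Proof.
move=> [_ Ha Hc _] i; case: ifP => [/andP [h1 h2]|h].
- have -> : i = k + (i - k) by lia.
  by apply: Hc; lia.
- by apply/count_memPn/negP => Hi; move/allP: Ha => /(_ i Hi); rewrite h.
Qed.

Lemma count_shift k i (w : seq nat) : count_mem (k + i) (map (addn k) w) = count_mem i w.
Proof. by rewrite count_map; apply: eq_count => x; rewrite /preim /= eqn_add2l. Qed.

Lemma valid_shift k n m w : valid 0 n m w -> valid k n m (map (addn k) w).
Proof.
move=> [Hs Ha Hc Hav]; split; first by rewrite size_map.
- by apply/allP => x /mapP [y Hy ->]; move/allP: Ha => /(_ y Hy) /=; lia.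
- by move=> i Hi; rewrite count_shift; apply: Hc.
- exact/pfree_shift.
Qed.

Lemma valid_unshift k n m U : valid k n m U ->
  U = map (addn k) (map (subn^~ k) U) /\ valid 0 n m (map (subn^~ k) U).
Proof.
move=> [Hs Ha Hc Hav].
have EU : U = map (addn k) (map (subn^~ k) U).
  rewrite -map_comp -[LHS]map_id; apply/eq_in_map => x Hx /=.
  by move/allP: Ha => /(_ x Hx); lia.
split => //; split; first by rewrite size_map.
- by apply/allP => x /mapP [y Hy ->]; move/allP: Ha => /(_ y Hy) /=; lia.
- by move=> i Hi; rewrite -(count_shift k) -EU; apply: Hc.
- by apply/(pfree_shift k); rewrite -EU.
Qed.

Ltac solve_count := rewrite ?mul1n ?mul0n ?addn0 ?add0n; repeat (case: ifP => ?); lia.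

Section Forms.
Variable m : nat.
Hypothesis m2 : 2 <= m.

Definition FA (w : seq nat) := nseq m 0 ++ map (addn 1) w.
Definition FB (w : seq nat) := nseq m.-1 0 ++ map (addn 1) w ++ [:: 0].
Definition FC (u : seq nat) := nseq m.-1 0 ++ nseq m.-1 1 ++ map (addn 2) u ++ [:: 0; 1].

Lemma FA_valid n w : valid 0 n.+2 m w -> valid 0 n.+3 m (FA w).
Proof.
move=> /(valid_shift 1) H; have Hc := count_valid H; case: H => Hs Ha _ Hav.
split; first by rewrite size_cat size_nseq Hs; nia.
- apply/allP => x; rewrite mem_cat mem_nseq => /orP [/andP [_ /eqP ->]//|Hx].
  by move/allP: Ha => /(_ x Hx) /=; lia.
- by move=> [|i] Hi; rewrite add0n count_cat count_nseq Hc /=; solve_count.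
- exact: pfree_zeros_cat (all_nseq0 _) Hav.
Qed.

Lemma FB_valid n w : valid 0 n.+2 m w -> valid 0 n.+3 m (FB w).
Proof.
move=> /(valid_shift 1) H; have Hc := count_valid H; case: H => Hs Ha _ Hav.
split; first by rewrite !size_cat size_nseq Hs /=; nia.
- apply/allP => x; rewrite !mem_cat mem_nseq inE.
  case/orP => [/andP [_ /eqP ->]//|/orP [Hx|/eqP ->//]].
  by move/allP: Ha => /(_ x Hx) /=; lia.
- by move=> [|i] Hi; rewrite add0n !count_cat count_nseq Hc /=; solve_count.
apply: pfree_zeros_cat (all_nseq0 _) _; apply: pfree_rcons => // a b Hsub.
have Hb : b \in map (addn 1) w by apply: (mem_subseq Hsub); rewrite !inE eqxx orbT.
move/allP: Ha => /(_ b Hb) /= hb.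
by rewrite /bad3; apply/negP => /andP [h1 /orP [/eqP hb0|h2]]; lia.
Qed.

Lemma FC_middle_pfree U : pfree U -> (forall x, x \in U -> 2 <= x) ->
  pfree (nseq m.-1 1 ++ U ++ [:: 0; 1]).
Proof.
move=> Hav HV.
have no_low a b c : subseq [:: a; b] U -> c <= 1 -> ~~ bad3 a b c.
  move=> Hsub hc; have := HV b (mem_subseq Hsub _); rewrite !inE eqxx orbT => /(_ isT).
  by rewrite /bad3; move=> hb; apply/negP => /andP [h1 /orP [/eqP hb0|h2]]; lia.
apply: pfree_cat.
- exact: pfree_nseq.
- rewrite -cat1s catA; apply: pfree_rcons.
  + by apply: pfree_rcons => // a b Hsub; apply: no_low.
  + move=> a b /subseq2_cat [Hsub|[_]|/size_subseq //].
    * exact: no_low.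
    * by rewrite inE => /eqP ->; rewrite /bad3; apply/negP => /andP [h1 /orP [h2|h2]]; lia.
- by move=> a b c Hsub _; apply: no_bad3_nseq Hsub.
- move=> a b c; rewrite mem_nseq => /andP [_ /eqP ->].
  rewrite /bad3; case: (posnP b) => [->|hb]; last by rewrite ltnNge hb.
  case/subseq2_cat => [Hsub|[Hb _]|/=].
  + by have := HV 0 (mem_subseq Hsub _); rewrite !inE eqxx => /(_ isT).
  + by have := HV 0 Hb.
  + by case: (c =P 1) => [->|].
Qed.

Lemma FC_valid n u : valid 0 n.+1 m u -> valid 0 n.+3 m (FC u).
Proof.
move=> /(valid_shift 2) H; have Hc := count_valid H; case: H => Hs Ha _ Hav.
split; first by rewrite !size_cat !size_nseq Hs /=; nia.
- apply/allP => x; rewrite !mem_cat !mem_nseq !inE.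
  case/orP => [/andP [_ /eqP ->]//|/orP [/andP [_ /eqP ->]//|/orP [Hx|/orP [/eqP ->|/eqP ->]]//]].
  by move/allP: Ha => /(_ x Hx) /=; lia.
- by move=> [|[|i]] Hi; rewrite add0n !count_cat !count_nseq Hc /=; solve_count.
apply: pfree_zeros_cat (all_nseq0 _) _; apply: FC_middle_pfree => // x Hx.
by move/allP: Ha => /(_ x Hx) /=; lia.
Qed.

End Forms.

Section Decomposition.
Variable m : nat.
Hypothesis m2 : 2 <= m.

Lemma lead_split v (s : seq nat) : exists k r, s = nseq k v ++ r /\
  (r = [::] \/ exists x t, r = x :: t /\ x != v).
Proof.
elim: s => [|y s [k [r [E H]]]]; first by exists 0, [::]; split; [|left].
case: (eqVneq y v) => [->|ne]; first by exists k.+1, r; rewrite E.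
by exists 0, (y :: s); split => //; right; exists y, s.
Qed.

(* The zeros of a valid word on >= 2 letters: either all m zeros come first,
   or m-1 zeros come first and the last zero is isolated later on (two zeros
   after a nonzero letter x would give the pattern x 0 0). *)
Lemma zeros_position n s : valid 0 n.+2 m s ->
  (exists r, s = nseq m 0 ++ r /\ 0 \notin r) \/
  (exists W T, [/\ s = nseq m.-1 0 ++ W ++ 0 :: T, W != [::], 0 \notin W & 0 \notin T]).
Proof.
move=> H; have Hc := count_valid H; case: H => Hs Ha _ Hav.
have [k [r [E Hr]]] := lead_split 0 s.
case: Hr => [Er|[x [t [Er Hx]]]].
  by have := Hc 1; rewrite E Er cats0 count_nseq /=; lia.
subst r.
have H0 := Hc 0; rewrite E count_cat count_nseq /= (negbTE Hx) add0n mul1n in H0.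
have Ht : count_mem 0 t <= 1.
  rewrite leqNgt; apply/negP => /subseq_count2 H2.
  apply: (pfree_bad Hav (a := x) (b := 0) (c := 0)).
    by rewrite E; apply: subseq_suffix; rewrite /= eqxx.
  by rewrite /bad3 eqxx lt0n Hx.
case: (posnP (count_mem 0 t)) => Ht0.
- left; exists (x :: t); split; first by rewrite E -H0 Ht0 addn0.
  by rewrite inE negb_or eq_sym Hx; apply/count_memPn.
- right; have Hin : 0 \in t by rewrite -has_pred1 has_count.
  move: H0 Ht Ht0 E; case/splitPr: Hin => P S; rewrite !count_cat /=.
  set cP := count_mem 0 P; set cS := count_mem 0 S => H0 Ht Ht0 E.
  exists (x :: P), S; split => //.
  + by rewrite E; have -> : k = m.-1 by lia.
  + by rewrite inE negb_or eq_sym Hx; apply/count_memPn; rewrite -/cP; lia.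
  + by apply/count_memPn; rewrite -/cS; lia.
Qed.

Lemma valid_block N n k p U q s : valid 0 N m s -> s = p ++ U ++ q -> k + n <= N ->
  (forall x, x \in U -> k <= x < k + n) ->
  (forall x, x \in p ++ q -> ~~ (k <= x < k + n)) ->
  size U = n * m -> valid k n m U.
Proof.
move=> H E hN HU Hpq HsU; have Hc := count_valid H; case: H => Hs Ha _ Hav.
split => //; first exact/allP.
- move=> i Hi; have := Hc (k + i); rewrite E !count_cat.
  have Hout (r : seq nat) : {subset r <= p ++ q} -> count_mem (k + i) r = 0.
    move=> Hr; apply/count_memPn/negP => /Hr /Hpq; rewrite leq_addr /=; lia.
  rewrite (Hout p) => [|x Hx]; last by rewrite mem_cat Hx.
  rewrite (Hout q) => [|x Hx]; last by rewrite mem_cat Hx orbT.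
  by rewrite addn0 add0n => ->; case: ifP => //; lia.
- by apply: pfree_subseq Hav; rewrite E; apply: subseq_suffix; exact: prefix_subseq.
Qed.

Lemma decomp_A n s r : valid 0 n.+3 m s -> s = nseq m 0 ++ r -> 0 \notin r ->
  exists2 w, valid 0 n.+2 m w & s = FA m w.
Proof.
move=> H E Hr; have [Hs Ha _ _] := H.
have G : valid 1 n.+2 m r.
  apply: (valid_block (p := nseq m 0) (q := [::]) H); rewrite ?cats0 //.
  - move=> x Hx; have := allP Ha x; rewrite E mem_cat Hx orbT => /(_ isT).
    have : x != 0 by apply: contraNneq Hr => <-.
    lia.
  - by move=> x; rewrite mem_nseq => /andP [_ /eqP ->].
  - by move: Hs; rewrite E size_cat size_nseq; nia.
have [EU Gw] := valid_unshift G.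
by exists (map (subn^~ 1) r) => //; rewrite E /FA -EU.
Qed.

Lemma decomp_B n s W : valid 0 n.+3 m s -> s = nseq m.-1 0 ++ W ++ [:: 0] ->
  0 \notin W -> exists2 w, valid 0 n.+2 m w & s = FB m w.
Proof.
move=> H E HW; have [Hs Ha _ _] := H.
have G : valid 1 n.+2 m W.
  apply: (valid_block (p := nseq m.-1 0) (q := [:: 0]) H E) => //.
  - move=> z Hz; have := allP Ha z; rewrite E !mem_cat Hz orbT => /(_ isT).
    have : z != 0 by apply: contraNneq HW => <-.
    lia.
  - by move=> z; rewrite mem_cat mem_nseq inE => /orP [/andP [_ /eqP ->]|/eqP ->].
  - by move: Hs; rewrite E !size_cat size_nseq /=; nia.
have [EU Gw] := valid_unshift G.
by exists (map (subn^~ 1) W) => //; rewrite E /FB -EU.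
Qed.

Section FormC.
Variables (n : nat) (s W T : seq nat).
Hypothesis Hval : valid 0 n.+3 m s.
Hypothesis Es : s = nseq m.-1 0 ++ W ++ 0 :: T.
Hypothesis HW : 0 \notin W.
Hypothesis W_nil : W != [::].
Hypothesis HT : 0 \notin T.
Hypothesis T_nil : T != [::].

Let Hc i : count_mem i s = if i < n.+3 then m else 0.
Proof. by rewrite (count_valid Hval). Qed.
Let Hav : pfree s. Proof. by case: Hval. Qed.

(* Letters after the isolated zero are at most those before it
   (otherwise a 0 c is an occurrence of 213). *)
Lemma tail_le_body a c : a \in W -> c \in T -> c <= a.
Proof.
move=> Ha Hc'; rewrite leqNgt; apply/negP => hac.
apply: (pfree_bad Hav (a := a) (b := 0) (c := c)).
  by rewrite Es; apply/subseq_suffix/sub3_cat => //; rewrite /= sub1seq.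
by rewrite /bad3 hac orbT andbT lt0n; apply: contraNneq HW => <-.
Qed.

(* The tail consists of ones: a letter c >= 2 in T would force all the ones
   into T, and then x 1 1 (x any letter of W) is an occurrence of 211. *)
Lemma tail_ones c : c \in T -> c = 1.
Proof.
move=> HcT; have c0 : c != 0 by apply: contraNneq HT => <-.
case: (ltngtP c 1) => // [|c1]; first by rewrite ltnS leqn0 (negbTE c0).
have [x HxW] : exists x, x \in W by case: W W_nil => // y W' _; exists y; exact: mem_head.
have no1W : count_mem 1 W = 0.
  by apply/count_memPn/negP => /tail_le_body /(_ HcT); lia.
have : 1 < count_mem 1 T.
  by have := Hc 1; rewrite Es !count_cat count_nseq no1W /=; lia.
move/subseq_count2 => H11; exfalso; apply: (pfree_bad Hav (a := x) (b := 1) (c := 1)).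
  by rewrite Es; apply/subseq_suffix/sub3_cat => //; apply: subseq_trans H11 (subseq_cons _ _).
by have := tail_le_body HxW HcT; rewrite /bad3 eqxx /=; lia.
Qed.

Lemma two_in_body : 2 \in W.
Proof.
have : 2 \in s by rewrite -has_pred1 has_count Hc /=; lia.
rewrite Es !mem_cat mem_nseq andbF /= inE /=.
by case/orP => // /tail_ones.
Qed.

(* The tail is a single 1: two ones after the isolated zero give 2 1 1. *)
Lemma tail_single : T = [:: 1].
Proof.
case ET: T T_nil => [//|y [|z S']] _.
  by rewrite (@tail_ones y) // ET mem_head.
have y1 : y = 1 by apply: tail_ones; rewrite ET mem_head.
have z1 : z = 1 by apply: tail_ones; rewrite ET !inE eqxx orbT.
exfalso; apply: (pfree_bad Hav (a := 2) (b := 1) (c := 1)) => //.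
rewrite Es ET y1 z1; apply/subseq_suffix/sub3_cat; first exact: two_in_body.
by rewrite /= sub0seq.
Qed.

(* W starts with m-1 ones, and no other 1 occurs in W (a later 1 after a
   letter y0 >= 2 of W would give y0 1 1 with the final 1). *)
Lemma body_ones : exists U, [/\ W = nseq m.-1 1 ++ U, 0 \notin U & 1 \notin U].
Proof.
have ones : count_mem 1 W = m.-1.
  by have := Hc 1; rewrite Es tail_single !count_cat count_nseq /=; lia.
have [j [r [EW Hr]]] := lead_split 1 W.
case: Hr => [Er|[y0 [t [Er Hy0]]]].
  by move: two_in_body; rewrite EW Er cats0 mem_nseq andbF.
subst r; have y00 : y0 != 0 by apply: contraNneq HW => <-; rewrite EW mem_cat mem_head orbT.
have no1 : 1 \notin t.
  apply/negP => Hin; apply: (pfree_bad Hav (a := y0) (b := 1) (c := 1)).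
    rewrite Es EW tail_single -!catA /=; apply: subseq_suffix; apply: subseq_suffix.
    by rewrite /= eqxx; apply: sub2_cat.
  by rewrite /bad3 eqxx /= ltn_neqAle eq_sym Hy0 lt0n y00.
exists (y0 :: t); split.
- have : j = m.-1.
    by move: ones; rewrite EW count_cat count_nseq /= (negbTE Hy0) (count_memPn no1); lia.
  by rewrite EW => ->.
- by apply: contra HW; rewrite EW mem_cat => ->; rewrite orbT.
- by rewrite inE negb_or eq_sym Hy0 no1.
Qed.

Lemma decomp_C : exists2 u, valid 0 n.+1 m u & s = FC m u.
Proof.
have [U [EW U0 U1]] := body_ones; have [Hs Ha _ _] := Hval.
have E : s = (nseq m.-1 0 ++ nseq m.-1 1) ++ U ++ [:: 0; 1].
  by rewrite Es tail_single EW -!catA.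
have G : valid 2 n.+1 m U.
  apply: (valid_block Hval E) => //.
  - move=> z Hz; have := allP Ha z; rewrite E !mem_cat Hz orbT => /(_ isT).
    have : z != 0 by apply: contraNneq U0 => <-.
    have : z != 1 by apply: contraNneq U1 => <-.
    lia.
  - by move=> z; rewrite !mem_cat !mem_nseq !inE; lia.
  - by move: Hs; rewrite E !size_cat !size_nseq /=; nia.
have [EU Gu] := valid_unshift G.
by exists (map (subn^~ 2) U) => //; rewrite E /FC -EU -catA.
Qed.

End FormC.

End Decomposition.

Lemma decompose m n s : 2 <= m -> valid 0 n.+3 m s ->
  [\/ exists2 w, valid 0 n.+2 m w & s = FA m w,
      exists2 w, valid 0 n.+2 m w & s = FB m w |
      exists2 u, valid 0 n.+1 m u & s = FC m u].
Proof.
move=> m2 H.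
case: (zeros_position m2 (n := n.+1) H) => [[r [E Hr]]|[W [T [E W_nil HW HT]]]].
  by apply: Or31; exact: (decomp_A m2 H E Hr).
case: T E HT => [|y T] E HT.
  by apply: Or32; exact: (decomp_B m2 H E HW).
by apply: Or33; exact: (decomp_C m2 H E HW W_nil HT isT).
Qed.

Lemma cat_injl (p X Y : seq nat) : p ++ X = p ++ Y -> X = Y.
Proof. by elim: p => //= a p IH [] /IH. Qed.

Lemma cat_injr (X Y Z : seq nat) : X ++ Z = Y ++ Z -> X = Y.
Proof. by move/(congr1 rev); rewrite !rev_cat => /cat_injl /(congr1 rev); rewrite !revK. Qed.

Section Enumeration.
Variable m : nat.
Hypothesis m2 : 2 <= m.

Definition two_letter k := nseq m.-1 0 ++ nseq k 1 ++ 0 :: nseq (m - k) 1.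

Lemma two_letter_valid k : k <= m -> valid 0 2 m (two_letter k).
Proof.
move=> hk; split.
- by rewrite /two_letter !size_cat /= !size_nseq; lia.
- by apply/allP => x; rewrite /two_letter !mem_cat !inE !mem_nseq; lia.
- by move=> [|[|i]] Hi //=; rewrite /two_letter !count_cat /= !count_nseq /=; lia.
apply: pfree_zeros_cat (all_nseq0 _) _; apply: pfree_cat.
- exact: pfree_nseq.
- by rewrite -cat1s; apply: pfree_zeros_cat => //; exact: pfree_nseq.
- by move=> a b c Hsub _; apply: no_bad3_nseq Hsub.
- move=> a b c; rewrite mem_nseq => /andP [_ /eqP ->] /=.
  case: ifP => [/eqP ->|_] Hsub.
  + by move: Hsub; rewrite sub1seq mem_nseq => /andP [_ /eqP ->].
  + have : b \in nseq (m - k) 1 by apply: (mem_subseq Hsub); rewrite !inE eqxx.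
    by rewrite mem_nseq => /andP [_ /eqP ->]; rewrite /bad3 ltnn.
Qed.

Lemma two_letter_decomp s : valid 0 2 m s -> exists2 k, k <= m & s = two_letter k.
Proof.
move=> H; have [Hs Ha _ _] := H.
have ones (r : seq nat) : {subset r <= s} -> 0 \notin r -> r = nseq (size r) 1.
  move=> Hr r0; apply/all_pred1P/allP => x Hx; have := allP Ha x (Hr x Hx).
  have : x != 0 by apply: contraNneq r0 => <-.
  by rewrite /=; lia.
case: (zeros_position m2 (n := 0) H) => [[r [E Hr]]|[W [T [E W_nil HW HT]]]].
- have Hsr : size r = m by move: Hs; rewrite E size_cat size_nseq; lia.
  exists 0 => //; rewrite E /two_letter subn0 -Hsr -(ones r) => [|x|//].
    by rewrite Hsr; case: m m2 => // m' _; rewrite nseqS_cat.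
  by rewrite E mem_cat => ->; rewrite orbT.
- have Hsz : size W + size T = m by move: Hs; rewrite E !size_cat /= size_nseq; lia.
  exists (size W); first by lia.
  rewrite E /two_letter -Hsz addKn -(ones W) => [|x Hx|//]; last first.
    by rewrite E !mem_cat Hx orbT.
  by rewrite -(ones T) // => x Hx; rewrite E !mem_cat inE Hx !orbT.
Qed.

(* The position of the isolated zero determines k. *)
Lemma two_letter_inj : injective two_letter.
Proof.
have pos k : find (pred1 0) (drop m.-1 (two_letter k)) = k.
  rewrite /two_letter drop_size_cat ?size_nseq // find_cat size_nseq.
  have -> : has (pred1 0) (nseq k 1) = false.
    by apply/negbTE/hasPn => x; rewrite mem_nseq => /andP [_ /eqP ->].
  by rewrite /= addn0.
by move=> k1 k2 E; rewrite -(pos k1) E pos.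
Qed.

Fixpoint words n : seq (seq nat) :=
  match n with
  | 0 => [:: [::]]
  | 1 => [:: nseq m 0]
  | 2 => [seq two_letter k | k <- iota 0 m.+1]
  | S ((S ((S _) as n1)) as n2) =>
      map (FA m) (words n2) ++ map (FB m) (words n2) ++ map (FC m) (words n1)
  end.

Lemma words1_spec : enumerates 1 m (words 1).
Proof.
split => // s; rewrite inE; split.
- move/eqP => ->; split; first by rewrite size_nseq mul1n.
  + by apply/allP => x; rewrite mem_nseq => /andP [_ /eqP ->].
  + by case=> // _; rewrite count_nseq /= mul1n.
  + exact: pfree_nseq.
- move=> [Hs Ha _ _]; apply/eqP.
  have -> : s = nseq (size s) 0 by apply/all_pred1P/allP => x /(allP Ha) /=; lia.
  by rewrite Hs mul1n.
Qed.

Lemma words2_spec : enumerates 2 m (words 2).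
Proof.
split; first by rewrite map_inj_uniq ?iota_uniq //; exact: two_letter_inj.
move=> s; split.
- by case/mapP => k; rewrite mem_iota add0n ltnS => /andP [_ hk] ->; exact: two_letter_valid.
- move/two_letter_decomp => [k hk ->]; apply/mapP; exists k => //.
  by rewrite mem_iota add0n ltnS hk.
Qed.

Lemma FA_inj : injective (FA m).
Proof. by move=> w1 w2 /cat_injl /(inj_map (@addnI 1)). Qed.

Lemma FB_inj : injective (FB m).
Proof. by move=> w1 w2 /cat_injl /cat_injr /(inj_map (@addnI 1)). Qed.

Lemma FC_inj : injective (FC m).
Proof. by move=> w1 w2 /cat_injl /cat_injl /cat_injr /(inj_map (@addnI 2)). Qed.

Lemma FA_mth w : nth 0 (FA m w) m.-1 = 0.
Proof. by rewrite /FA nth_cat size_nseq ifT ?nth_nseq ?ifT //; lia. Qed.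

Lemma FB_mth w : w != [::] -> nth 0 (FB m w) m.-1 != 0.
Proof. by case: w => // a w _; rewrite /FB nth_cat size_nseq ltnn subnn. Qed.

Lemma FC_mth u : nth 0 (FC m u) m.-1 = 1.
Proof.
by rewrite /FC nth_cat size_nseq ltnn subnn nth_cat size_nseq ifT ?nth_nseq ?ifT //; lia.
Qed.

Lemma FB_last w : last 0 (FB m w) = 0.
Proof. by rewrite /FB !last_cat. Qed.

Lemma FC_last u : last 0 (FC m u) = 1.
Proof. by rewrite /FC !last_cat. Qed.

Lemma words_step n : enumerates n.+1 m (words n.+1) -> enumerates n.+2 m (words n.+2) ->
  enumerates n.+3 m (words n.+3).
Proof.
move=> [U1 H1] [U2 H2].
have nonempty w : w \in words n.+2 -> w != [::].
  by move=> /H2 [Hs _ _ _]; apply: contra_eqN Hs => /eqP ->; rewrite /=; nia.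
split.
- rewrite /= !cat_uniq !map_inj_uniq ?U1 ?U2 /=; try exact: FA_inj; try exact: FB_inj;
    try exact: FC_inj.
  rewrite andbT; apply/andP; split.
  + apply/hasPn => x; rewrite mem_cat => /orP [] /mapP [w Hw ->];
    apply/mapP => -[w' _ /(congr1 (fun s => nth 0 s m.-1))].
    * by rewrite FA_mth => E; move: (FB_mth (nonempty w Hw)); rewrite E.
    * by rewrite FA_mth FC_mth.
  + apply/hasPn => x /mapP [w Hw ->]; apply/mapP => -[w' _ /(congr1 (last 0))].
    by rewrite FB_last FC_last.
- move=> s; rewrite /= !mem_cat; split.
  + case/orP => [/mapP [w /H2 Hw ->]|/orP [/mapP [w /H2 Hw ->]|/mapP [w /H1 Hw ->]]].
    * exact: FA_valid.
    * exact: FB_valid.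
    * exact: FC_valid.
  + case/(decompose m2) => [[w Hw ->]|[w Hw ->]|[u Hu ->]].
    * by rewrite map_f //; apply/H2.
    * by rewrite map_f ?orbT //; apply/H2.
    * by rewrite map_f ?orbT //; apply/H1.
Qed.

Lemma words_spec n : enumerates n.+1 m (words n.+1) /\ enumerates n.+2 m (words n.+2).
Proof.
elim: n => [|n [h1 h2]]; first by split; [exact: words1_spec | exact: words2_spec].
by split => //; apply: words_step.
Qed.

End Enumeration.

Theorem theorem5 :
  forall m : nat, 2 <= m ->
    s_count 1 m [:: [:: 2; 1; 1]; [:: 2; 1; 3]] = 1 /\
    s_count 2 m [:: [:: 2; 1; 1]; [:: 2; 1; 3]] = m + 1 /\
    (forall n : nat, 3 <= n ->
       s_count n m [:: [:: 2; 1; 1]; [:: 2; 1; 3]] =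
         2 * s_count n.-1 m [:: [:: 2; 1; 1]; [:: 2; 1; 3]]
         + s_count n.-2 m [:: [:: 2; 1; 1]; [:: 2; 1; 3]]).
Proof.
move=> m m2; have [E1 E2] := words_spec m2 0.
split; first by rewrite (s_count_enum E1).
split; first by rewrite (s_count_enum E2) size_map size_iota addn1.
case=> [|[|[|n]]] // _; have [Ea Eb] := words_spec m2 n.
rewrite /= (s_count_enum (words_step m2 Ea Eb)) (s_count_enum Eb) (s_count_enum Ea).
by rewrite /= !size_cat !size_map; lia.
Qed.
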